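(* Let $K$ be a compact Hausdorff space and $\phi:K\to K$ a continuous map. Suppose there is an uncountable subset $A\subset K$ such that $\phi|_A$ is injective and $\phi(A)\cap A=\emptyset$. Then the composition operator $T=C_\phi:C(K)\to C(K)$, $f\mapsto f\circ\phi$, has the property that for every $g\in\mathfrak B(K)$, the operator $T^*+M_g^*:C(K)^*\to C(K)^*$ does not have separable range.
   Context: $C(K)$ is the Banach space of continuous real-valued functions on $K$ with the sup norm, and $C(K)^*$ is identified with the space of finite regular signed Borel measures on $K$. $\mathfrak B(K)$ denotes the space of bounded real-valued Borel functions on $K$. For $g\in\mathfrak B(K)$, $M_g^*:C(K)^*\to C(K)^*$ is the operator sending a measure $\mu$ to the measure $g\,\mathrm d\mu$. $T^*$ denotes the Banach space adjoint of $T$. *)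

From HB Require Import structures.
From mathcomp Require Import all_boot all_order all_algebra.
From mathcomp Require Import all_classical all_reals all_analysis.
Set Implicit Arguments. Unset Strict Implicit. Unset Printing Implicit Defensive.
Import Order.TTheory GRing.Theory Num.Theory.
Import numFieldNormedType.Exports.
Local Open Scope classical_set_scope.
Local Open Scope ring_scope.

Definition Borel (K : ptopologicalType) := g_sigma_algebraType (@open K).

Section defs.
Context (R : realType) (K : ptopologicalType).
Local Notation BK := (Borel K).

Definition regular_measure (mu : {finite_measure set BK -> \bar R}) : Prop :=
  forall E : set BK, measurable E ->
    (forall e : R, 0 < e -> exists U : set K,
        open U /\ E `<=` U /\ (mu U <= mu E + e%:E)%E) /\
    (forall e : R, 0 < e -> exists C : set K,
        compact C /\ C `<=` E /\ (mu E <= mu C + e%:E)%E).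

(* An element of C(K)^*, i.e. a finite regular signed Borel measure, is
   represented as a difference mu.1 - mu.2 of two finite regular positive
   Borel measures (Jordan decomposition; every such difference is a regular
   signed measure and every regular signed measure is such a difference). *)
Definition smeas := ({finite_measure set BK -> \bar R} *
                     {finite_measure set BK -> \bar R})%type.

Definition regular_smeas (mu : smeas) : Prop :=
  regular_measure mu.1 /\ regular_measure mu.2.

Definition sm_set (mu : smeas) (A : set BK) : R :=
  fine (mu.1 A) - fine (mu.2 A).

Definition sm_int (mu : smeas) (A : set BK) (f : BK -> R) : R :=
  Rintegral mu.1 A f - Rintegral mu.2 A f.

Definition mul_sm (g : BK -> R) (mu : smeas) (A : set BK) : R :=
  sm_int mu A g.

Definition bounded_borel (g : BK -> R) : Prop :=
  measurable_fun [set: BK] g /\ exists M : R, forall x, `|g x| <= M.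

Definition borel_partition (Es : seq (set BK)) : Prop :=
  (forall E, E \in Es -> measurable E) /\
  (forall i j, (i < size Es)%N -> (j < size Es)%N -> i <> j ->
     nth set0 Es i `&` nth set0 Es j = set0) /\
  (forall x : BK, exists2 E, E \in Es & E x).

Definition tv_le (s : set BK -> R) (e : R) : Prop :=
  forall Es, borel_partition Es -> \sum_(E <- Es) `|s E| <= e.

(* nu = T^* mu for the composition operator T = C_phi, i.e.
   (T^* mu)(f) = mu(f o phi) for every f in C(K), under the Riesz
   identification of C(K)^* with regular signed measures *)
Definition is_comp_adjoint (phi : K -> K) (mu nu : smeas) : Prop :=
  forall f : K -> R, continuous f ->
    sm_int nu [set: BK] f = sm_int mu [set: BK] (f \o phi).

Definition in_range_adj (phi : K -> K) (g : BK -> R) (nu : set BK -> R) : Prop :=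
  exists mu rho : smeas, [/\ regular_smeas mu, regular_smeas rho,
    is_comp_adjoint phi mu rho &
    forall A : set BK, measurable A -> nu A = sm_set rho A + mul_sm g mu A].

Definition separable_range (phi : K -> K) (g : BK -> R) : Prop :=
  exists nus : nat -> (set BK -> R),
    (forall n, in_range_adj phi g (nus n)) /\
    forall nu, in_range_adj phi g nu ->
      forall e : R, 0 < e -> exists n, tv_le (fun A => nu A - nus n A) e.

End defs.

From HB Require Import structures.
From mathcomp Require Import all_boot all_order all_algebra.
From mathcomp Require Import all_classical all_reals all_analysis.
From mathcomp Require Import measurable_realfun.
From mathcomp Require Import lra.
Set Implicit Arguments. Unset Strict Implicit. Unset Printing Implicit Defensive.

Import Order.TTheory GRing.Theory Num.Theory.
Import numFieldNormedType.Exports.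
Local Open Scope classical_set_scope.
Local Open Scope ring_scope.

(* For x in A, the measure  T^* d_x + M_g^* d_x = d_(phi x) + g(x) d_x  lies in
   the range.  For distinct a, b in A the set {phi a} has measure 1 under the
   first (phi a <> a since phi(A) misses A) and 0 under the second (phi b <> phi a
   by injectivity, b <> phi a since phi a is not in A), so these measures are
   1-apart in total variation.  A separable range cannot contain uncountably many
   1-separated elements. *)

Section borel.
Variables (R : realType) (K : ptopologicalType).
Local Notation BK := (Borel K).

Lemma measurable_open (U : set K) : open U -> measurable (U : set BK).
Proof. by move=> oU; apply: sub_sigma_algebra. Qed.

Lemma measurable_closed (U : set K) : closed U -> measurable (U : set BK).
Proof.
move=> cU; rewrite -(setCK U); apply: measurableC.
by apply: measurable_open; exact: closed_openC.
Qed.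

Lemma continuous_measurable_fun (f : K -> R) : continuous f ->
  measurable_fun [set: BK] (f : BK -> R).
Proof.
move=> /continuousP cf; apply: (measurability _ (RGenOpens.measurableE R)).
move=> _ [_ [a [b ->] <-]]; rewrite setTI.
by apply: measurable_open; apply: cf; exact: interval_open.
Qed.

Lemma tv_le_norm {s : set BK -> R} {e : R} {S : set BK} :
  tv_le s e -> measurable S -> `|s S| <= e.
Proof.
move=> tvs mS; have part : borel_partition [:: S; ~` S].
  split; [|split].
  - move=> E; rewrite !in_cons in_nil orbF => /orP[/eqP->|/eqP->] //.
    exact: measurableC.
  - move=> [|[|i]] [|[|j]] //= _ _ _; first exact: setICr.
    by rewrite setIC setICr.
  - move=> x; have [Sx|nSx] := pselect (S x).
      by exists S; rewrite // in_cons eqxx.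
    by exists (~` S); rewrite // !in_cons eqxx orbT.
have := tvs _ part; rewrite !big_cons big_nil addr0.
by apply: le_trans; rewrite lerDl.
Qed.

Lemma separated_countable (T : Type) (P : (set BK -> R) -> Prop)
    (nus : nat -> set BK -> R) (A : set T) (F : T -> set BK -> R) :
  (forall nu, P nu -> forall e, 0 < e ->
     exists n, tv_le (fun S => nu S - nus n S) e) ->
  (forall x, A x -> P (F x)) ->
  (forall x y, A x -> A y -> x <> y ->
     exists2 S, measurable S & 1 <= `|F x S - F y S|) ->
  countable A.
Proof.
move=> dense PF sep.
have [n approx] : {n : T -> nat & forall x, A x ->
    tv_le (fun S => F x S - nus (n x) S) (1/3)}.
  apply: (@choice _ _ (fun x m => A x -> tv_le (fun S => F x S - nus m S) _)).
  move=> x; have [Ax|nAx] := pselect (A x); last by exists 0%N => /nAx.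
  by have [m ?] := dense _ (PF x Ax) (1/3) ltac:(lra); exists m.
apply/countable_injP; exists n => x y /set_mem Ax /set_mem Ay nxy.
apply: contrapT => xy; have [S mS] := sep x y Ax Ay xy.
have := tv_le_norm (approx x Ax) mS; have := tv_le_norm (approx y Ay) mS.
rewrite nxy; have := ler_normB (F x S - nus (n y) S) (F y S - nus (n y) S).
rewrite opprB addrA subrK; lra.
Qed.

End borel.

Section dirac.
Variables (R : realType) (K : ptopologicalType).
Local Notation BK := (Borel K).
Local Notation fmeasure := {finite_measure set BK -> \bar R}.

Definition dirac_smeas (a : BK) : smeas R K := (\d_a : fmeasure, mzero : fmeasure).

Lemma fdiracE (a : BK) (U : set BK) : (\d_a : fmeasure) U = ((a \in U)%:R)%:E.
Proof. exact: diracE. Qed.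

Lemma regular_mzero : regular_measure (mzero : fmeasure).
Proof.
move=> E mE; split=> e e0.
  exists setT; split; [exact: openT|split=> //].
  by rewrite /= add0e lee_fin ltW.
exists set0; split; [exact: compact0|split=> //].
by rewrite /= add0e lee_fin ltW.
Qed.

Lemma regular_dirac (a : BK) : hausdorff_space K ->
  regular_measure (\d_a : fmeasure).
Proof.
move=> hK E mE.
have [aE|naE] := boolP (a \in E); split=> e e0.
- exists setT; split; [exact: openT|split=> //].
  by rewrite !fdiracE aE in_setT lee_fin lerDl ltW.
- exists [set a]; split; first exact: compact_set1.
  split; first by move=> _ ->; exact/set_mem.
  by rewrite !fdiracE aE mem_set // lee_fin lerDl ltW.
- exists (~` [set (a : K)]); split.
    exact/closed_openC/accessible_closed_set1/hausdorff_accessible.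
  split; first by move=> x Ex xa; move: naE; rewrite -xa (mem_set Ex).
  by rewrite !fdiracE (negbTE naE) memNset //= -EFinD lee_fin add0r ltW.
- exists set0; split; [exact: compact0|split=> //].
  by rewrite !fdiracE (negbTE naE) in_set0 /= -EFinD lee_fin add0r ltW.
Qed.

Lemma regular_dirac_smeas (a : BK) : hausdorff_space K ->
  regular_smeas (dirac_smeas a).
Proof. by move=> hK; split; [exact: regular_dirac|exact: regular_mzero]. Qed.

Lemma sm_int_dirac (a : BK) (D : set BK) (f : BK -> R) :
  measurable D -> measurable_fun D f ->
  sm_int (dirac_smeas a) D f = (a \in D)%:R * f a.
Proof.
move=> mD mf; rewrite /sm_int /Rintegral integral_measure_zero.
by rewrite integral_dirac //= ?subr0 //; exact/measurable_EFinP.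
Qed.

Lemma sm_set_dirac (a : BK) (S : set BK) :
  sm_set (dirac_smeas a) S = (a \in S)%:R.
Proof. by rewrite /sm_set /= indicE subr0. Qed.

End dirac.

Section adjoint_dirac.
Variables (R : realType) (K : ptopologicalType) (phi : K -> K) (g : Borel K -> R).
Hypotheses (hK : hausdorff_space K) (cphi : continuous phi)
  (mg : measurable_fun [set: Borel K] g).

Definition adjoint_dirac (x : K) (S : set (Borel K)) : R :=
  sm_set (dirac_smeas R (phi x : Borel K)) S + mul_sm g (dirac_smeas R x) S.

Lemma adjoint_diracE (x : K) (S : set (Borel K)) : measurable S ->
  adjoint_dirac x S = (phi x \in S)%:R + (x \in S)%:R * g x.
Proof.
move=> mS; rewrite /adjoint_dirac /mul_sm sm_set_dirac sm_int_dirac //.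
exact: measurable_funS mg.
Qed.

Lemma in_range_adjoint_dirac (x : K) : in_range_adj phi g (adjoint_dirac x).
Proof.
exists (dirac_smeas R x), (dirac_smeas R (phi x)).
split=> //; try exact: regular_dirac_smeas.
move=> f cf; rewrite !sm_int_dirac //; apply: continuous_measurable_fun => //.
by move=> y; apply: continuous_comp; [exact: cphi|exact: cf].
Qed.

End adjoint_dirac.

Theorem lemma4 (R : realType) (K : ptopologicalType) (phi : K -> K)
  (A : set K) :
  compact [set: K] -> hausdorff_space K -> continuous phi ->
  ~ countable A -> {in A &, injective phi} -> phi @` A `&` A = set0 ->
  forall g : Borel K -> R, bounded_borel g -> ~ separable_range phi g.
Proof.
move=> _ hK cphi Aunc injA disj g [mg _] [nus [_ dense]].
have phiA_notin x : A x -> ~ A (phi x).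
  move=> Ax Apx; have : (phi @` A `&` A) (phi x) by split=> //; exists x.
  by rewrite disj.
have in_range x : A x -> in_range_adj phi g (adjoint_dirac phi g x).
  by move=> _; exact: in_range_adjoint_dirac.
apply/Aunc/(separated_countable dense in_range).
move=> a b Aa Ab ab.
have m_phia : measurable [set phi a : Borel K].
  by apply: measurable_closed; exact/accessible_closed_set1/hausdorff_accessible.
exists [set phi a : Borel K]; rewrite // !adjoint_diracE //.
rewrite mem_set // !memNset ?mul0r ?addr0 ?subr0 ?normr1 //=.
- by move=> ba; apply: (phiA_notin a Aa); rewrite -ba.
- by move=> e; apply/ab/esym/injA; rewrite ?inE.
- by move=> e; apply: (phiA_notin a Aa); rewrite -e.
Qed.
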